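(* Let $K\in\mathcal S_2\setminus\{\emptyset,\mathbb R^2\}$ and $u\in S^1$. Then the Steiner symmetral $S_u(K)$ of $K$ in direction $u$ also belongs to $\mathcal S_2$.
   Context: $B(x,r)$ is the closed Euclidean disk. $\mathcal S_2$ is the class of all sets of the form $\bigcap_{x\in A}B(x,1)$ for $A\subseteq\mathbb R^2$. For a convex body $L$ and $u\in S^{1}$, the Steiner symmetral is $S_u(L)=\{x+tu:\ x\in P_{u^\perp}L,\ |t|\le\tfrac{b(x)-a(x)}2\}$, where $L\cap(x+\mathbb Ru)=[x+a(x)u,x+b(x)u]$. *)

From Stdlib Require Import Reals.
Open Scope R_scope.

Definition pt : Type := (R * R)%type.

Definition unit_disk (x y : pt) : Prop :=
  (fst y - fst x) ^ 2 + (snd y - snd x) ^ 2 <= 1.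

Definition disk_intersection (A : pt -> Prop) : pt -> Prop :=
  fun y => forall x, A x -> unit_disk x y.

Definition in_S2 (K : pt -> Prop) : Prop :=
  exists A : pt -> Prop, forall y, K y <-> disk_intersection A y.

Definition unit_vector (u : pt) : Prop := fst u ^ 2 + snd u ^ 2 = 1.

Definition orthogonal (x u : pt) : Prop := fst x * fst u + snd x * snd u = 0.

Definition shift (x : pt) (t : R) (u : pt) : pt :=
  (fst x + t * fst u, snd x + t * snd u).

Definition steiner (u : pt) (L : pt -> Prop) : pt -> Prop :=
  fun y => exists (x : pt) (t a b : R),
    orthogonal x u /\ a <= b /\
    (forall s, L (shift x s u) <-> a <= s <= b) /\
    Rabs t <= (b - a) / 2 /\
    y = shift x t u.

(* Work in the coordinates (s, t) of the frame (u^perp, u) and let c(x) = sqrt (1 - x^2)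
   be the height of the unit semicircle.  For K = ⋂_{a ∈ A} B(a,1) the chord of K above
   abscissa s is ⋂_a [t_a - c(s - s_a), t_a + c(s - s_a)], so (s, t) lies in S_u(K) iff
   2|t| <= (t_a + c(s - s_a)) - (t_b - c(s - s_b)) for all a, b in A.  Hence it suffices to
   cut off any point (s0, t0) violating one such pair condition by a unit disk containing
   all points satisfying it.  Choose p such that the slope of c at p is the average of its
   slopes at p1 = s0 - s_a and p2 = s0 - s_b; the disk centred at (s0 - p, ±(h - c(p))),
   h being half the gap, does the job, because P |-> c(p1 + P) + c(p2 + P) - 2 c(p + P)
   is maximal at P = 0.  The latter holds since T = -c' turns into a convex function after
   the substitution x |-> T (T^-1 x + P), P >= 0, as a Cauchy mean value argument shows. *)

From Coquelicot Require Import Coquelicot.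
From Stdlib Require Import Reals Lra Psatz Classical.
Open Scope R_scope.

Lemma continuity_pt_of_is_derive (f df : R -> R) (x : R) :
  is_derive f x (df x) -> continuity_pt f x.
Proof.
  intros Hf. apply continuity_pt_filterlim.
  apply (ex_derive_continuous (K := R_AbsRing) (V := R_NormedModule)).
  now exists (df x).
Qed.

Lemma nonincreasing_of_derive_nonpos (f df : R -> R) (a b : R) : a <= b ->
  (forall x, a < x < b -> is_derive f x (df x)) ->
  (forall x, a < x < b -> df x <= 0) ->
  (forall x, a <= x <= b -> continuity_pt f x) ->
  f b <= f a.
Proof.
  intros Hab Hf Hdf Hc.
  (* [Rmin 0 (df x)] agrees with [df x] inside, and is nonpositive at the endpoints too *)
  destruct (MVT_gen f a b (fun x => Rmin 0 (df x))) as [c [_ E]].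
  - rewrite Rmin_left, Rmax_right by lra. intros x Hx.
    rewrite Rmin_right by (apply Hdf; lra). now apply Hf.
  - rewrite Rmin_left, Rmax_right by lra. exact Hc.
  - pose proof (Rmin_l 0 (df c)). nra.
Qed.

Lemma cauchy_MVT (f g df dg : R -> R) (a b : R) : a <= b ->
  (forall x, a <= x <= b -> is_derive f x (df x)) ->
  (forall x, a <= x <= b -> is_derive g x (dg x)) ->
  exists c, a <= c <= b /\ dg c * (f b - f a) = df c * (g b - g a).
Proof.
  intros Hab Hf Hg.
  destruct (Req_dec a b) as [<-|Hne].
  { exists a. split; [lra | ring]. }
  set (k := f b - f a). set (l := g b - g a).
  destruct (MVT_gen (fun x => l * f x - k * g x) a b (fun x => l * df x - k * dg x))
    as [c [Hc E]]; rewrite Rmin_left, Rmax_right in * by lra.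
  - intros x Hx. apply (is_derive_minus (fun x => l * f x) (fun x => k * g x)).
    + apply (is_derive_scal f). apply Hf; lra.
    + apply (is_derive_scal g). apply Hg; lra.
  - intros x Hx. apply continuity_pt_minus; apply continuity_pt_scal.
    + apply (continuity_pt_of_is_derive f df). now apply Hf.
    + apply (continuity_pt_of_is_derive g dg). now apply Hg.
  - exists c. split; [exact Hc|].
    assert (l * df c - k * dg c = 0).
    { apply (Rmult_eq_reg_r (b - a)); [|lra].
      rewrite <- E. unfold k, l. ring. }
    lra.
Qed.

Lemma midpoint_convex_of_derive_ratio (f g df dg : R -> R) (x1 x0 x2 : R) :
  x1 <= x0 <= x2 ->
  (forall x, x1 <= x <= x2 -> is_derive f x (df x)) ->
  (forall x, x1 <= x <= x2 -> is_derive g x (dg x)) ->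
  (forall x, x1 <= x <= x2 -> 0 < dg x) ->
  (forall c d, x1 <= c -> c <= d -> d <= x2 -> df c * dg d <= df d * dg c) ->
  g x0 - g x1 = g x2 - g x0 -> f x0 - f x1 <= f x2 - f x0.
Proof.
  intros Hx Hf Hg Hdg Hratio E.
  destruct (cauchy_MVT f g df dg x1 x0) as [c1 [Hc1 E1]];
    [lra | intros; apply Hf; lra | intros; apply Hg; lra |].
  destruct (cauchy_MVT f g df dg x0 x2) as [c2 [Hc2 E2]];
    [lra | intros; apply Hf; lra | intros; apply Hg; lra |].
  destruct (cauchy_MVT (fun x => x) g (fun _ => 1) dg x1 x0) as [c [Hc Eg]];
    [lra | intros; auto_derive; auto | intros; apply Hg; lra |].
  pose proof (Hdg c1 ltac:(lra)). pose proof (Hdg c2 ltac:(lra)). pose proof (Hdg c ltac:(lra)).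
  assert (HD : 0 <= g x0 - g x1) by nra.
  pose proof (Hratio c1 c2 ltac:(lra) ltac:(lra) ltac:(lra)) as Hr.
  assert (dg c1 * dg c2 * (f x0 - f x1) <= dg c1 * dg c2 * (f x2 - f x0)).
  { replace (dg c1 * dg c2 * (f x0 - f x1)) with (dg c2 * (df c1 * (g x0 - g x1)))
      by (rewrite <- E1; ring).
    replace (dg c1 * dg c2 * (f x2 - f x0)) with (dg c1 * (df c2 * (g x0 - g x1)))
      by (rewrite E, <- E2; ring).
    nra. }
  assert (0 < dg c1 * dg c2) by nra.
  nra.
Qed.

Lemma is_derive_shift (f : R -> R) (P x l : R) :
  is_derive f (x + P) l -> is_derive (fun y => f (y + P)) x l.
Proof.
  intros Hf.
  assert (Hs : is_derive (fun y => y + P) x 1) by (auto_derive; [easy | ring]).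
  pose proof (is_derive_comp f (fun y => y + P) x l 1 Hf Hs) as H.
  unfold scal in H; simpl in H; unfold mult in H; simpl in H.
  now rewrite Rmult_1_l in H.
Qed.

Definition circ (x : R) : R := sqrt (1 - x ^ 2).
Definition circ_slope (x : R) : R := x / circ x.
Definition circ_slope' (x : R) : R := / circ x ^ 3.

Lemma sqr_le_1_iff (x : R) : x ^ 2 <= 1 <-> -1 <= x <= 1.
Proof. split; intros; nra. Qed.

Lemma circ_ge0 (x : R) : 0 <= circ x.
Proof. apply sqrt_pos. Qed.

Lemma circ_gt0 (x : R) : -1 < x < 1 -> 0 < circ x.
Proof. intros Hx. apply sqrt_lt_R0. nra. Qed.

Lemma circ_sqr (x : R) : -1 <= x <= 1 -> circ x ^ 2 = 1 - x ^ 2.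
Proof. intros Hx. unfold circ. rewrite pow2_sqrt; nra. Qed.

Lemma circ_opp (x : R) : circ (- x) = circ x.
Proof. unfold circ. f_equal. ring. Qed.

Lemma circ_slope_opp (x : R) : circ_slope (- x) = - circ_slope x.
Proof. unfold circ_slope. rewrite circ_opp. unfold Rdiv. ring. Qed.

Lemma circ_le_sqr (x y : R) : x ^ 2 <= y ^ 2 -> circ y <= circ x.
Proof. intros H. apply sqrt_le_1_alt. lra. Qed.

Lemma disk_circ_iff (x y : R) : x ^ 2 + y ^ 2 <= 1 <-> x ^ 2 <= 1 /\ Rabs y <= circ x.
Proof.
  split.
  - intros H. split; [nra|].
    rewrite <- sqrt_Rsqr_abs. apply sqrt_le_1_alt. unfold Rsqr. nra.
  - intros [Hx Hy]. pose proof (circ_sqr x ltac:(nra)). pose proof (Rabs_pos y).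
    rewrite <- (pow2_abs y). nra.
Qed.

Lemma circ_triangle (e x P : R) : e ^ 2 = 1 ->
  -1 <= x <= 1 -> -1 <= x + P <= 1 -> -1 <= e + P <= 1 ->
  circ (x + P) <= circ x + circ (e + P).
Proof.
  intros He Hx HxP HeP.
  pose proof (circ_ge0 x). pose proof (circ_ge0 (e + P)).
  pose proof (circ_sqr x Hx). pose proof (circ_sqr (e + P) HeP).
  assert (0 <= circ x * circ (e + P)) by nra.
  unfold circ at 1. rewrite <- (sqrt_pow2 (circ x + circ (e + P))) by lra.
  apply sqrt_le_1_alt.
  assert (e = 1 \/ e = -1) as [-> | ->] by (destruct (Rle_lt_dec 0 e); [left|right]; nra); nra.
Qed.

Lemma continuous_circ (x : R) : continuity_pt circ x.
Proof.
  apply continuity_pt_filterlim. apply continuous_sqrt_comp.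
  apply (ex_derive_continuous (K := R_AbsRing) (V := R_NormedModule) (fun y => 1 - y ^ 2)).
  auto_derive. easy.
Qed.

Lemma is_derive_circ (x : R) : -1 < x < 1 -> is_derive circ x (- circ_slope x).
Proof.
  intros Hx. pose proof (circ_gt0 x Hx) as Hc.
  unfold circ_slope, circ in *. auto_derive.
  - nra.
  - replace (1 + - (x * (x * 1))) with (1 - x ^ 2) by ring. field. lra.
Qed.

Lemma is_derive_circ_slope (x : R) : -1 < x < 1 -> is_derive circ_slope x (circ_slope' x).
Proof.
  intros Hx. pose proof (circ_gt0 x Hx) as Hc. pose proof (circ_sqr x ltac:(lra)) as Hs.
  unfold circ_slope', circ_slope, circ in *.
  auto_derive; replace (1 + - (x * (x * 1))) with (1 - x ^ 2) by ring.
  - split; [nra | split; [apply Rgt_not_eq, Hc | exact I]].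
  - set (s := sqrt (1 - x ^ 2)) in *. field_simplify; [|lra..].
    rewrite Hs. field. lra.
Qed.

Lemma circ_slope'_gt0 (x : R) : -1 < x < 1 -> 0 < circ_slope' x.
Proof. intros Hx. apply Rinv_0_lt_compat, pow_lt, circ_gt0, Hx. Qed.

Lemma circ_slope_lt (x y : R) : -1 < x -> x < y -> y < 1 -> circ_slope x < circ_slope y.
Proof.
  intros Hx Hxy Hy. apply (incr_function circ_slope (-1) 1 circ_slope'); simpl; try lra.
  - intros z Hz1 Hz2. apply is_derive_circ_slope. lra.
  - intros z Hz1 Hz2. apply circ_slope'_gt0. lra.
Qed.

Lemma circ_slope_mid_between (p1 p2 p : R) : -1 < p1 -> p1 <= p2 -> p2 < 1 ->
  -1 < p < 1 -> circ_slope p = (circ_slope p1 + circ_slope p2) / 2 -> p1 <= p <= p2.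
Proof.
  intros H1 H12 H2 Hp E.
  assert (circ_slope p1 <= circ_slope p2).
  { destruct (Req_dec p1 p2) as [<-|Hne]; [lra|].
    left. apply circ_slope_lt; lra. }
  split; apply Rnot_lt_le; intros Hlt.
  - pose proof (circ_slope_lt p p1 ltac:(lra) Hlt ltac:(lra)). lra.
  - pose proof (circ_slope_lt p2 p ltac:(lra) Hlt ltac:(lra)). lra.
Qed.

Lemma circ_slope_surj (y : R) : exists x, -1 < x < 1 /\ circ_slope x = y.
Proof.
  assert (Hs : 0 < sqrt (1 + y ^ 2)) by (apply sqrt_lt_R0; nra).
  pose proof (pow2_sqrt (1 + y ^ 2) ltac:(nra)) as Hs2.
  set (s := sqrt (1 + y ^ 2)) in *.
  assert (Hc : circ (y / s) = / s).
  { unfold circ. rewrite <- (sqrt_pow2 (/ s)) by (left; apply Rinv_0_lt_compat, Hs).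
    f_equal. field_simplify; [|lra..]. now replace (- y ^ 2 + s ^ 2) with 1 by lra. }
  exists (y / s). split.
  - assert ((y / s) ^ 2 < 1); [|nra].
    replace ((y / s) ^ 2) with (y ^ 2 / s ^ 2) by (field; lra).
    apply Rmult_lt_reg_r with (s ^ 2); [nra|]. field_simplify; lra.
  - unfold circ_slope. rewrite Hc. field. lra.
Qed.

Lemma circ_shift_ratio_le (c d P : R) : 0 <= P -> -1 < c -> c <= d -> d + P < 1 ->
  circ (d + P) * circ c <= circ (c + P) * circ d.
Proof.
  intros HP Hc Hcd Hd. unfold circ.
  rewrite <- !sqrt_mult by nra. apply sqrt_le_1_alt.
  assert (0 < 1 + c * (d + P)) by nra.
  assert (0 < 1 + d * (c + P)) by nra.
  assert (0 <= P * (d - c)) by nra.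
  assert ((1 - (c + P) ^ 2) * (1 - d ^ 2) - (1 - (d + P) ^ 2) * (1 - c ^ 2)
          = P * (d - c) * ((1 + c * (d + P)) + (1 + d * (c + P)))) by ring.
  nra.
Qed.

Lemma circ_slope'_shift_ratio_le (c d P : R) : 0 <= P -> -1 < c -> c <= d -> d + P < 1 ->
  circ_slope' (c + P) * circ_slope' d <= circ_slope' (d + P) * circ_slope' c.
Proof.
  intros HP Hc Hcd Hd. unfold circ_slope'.
  rewrite <- !Rinv_mult, <- !Rpow_mult_distr.
  pose proof (circ_gt0 c ltac:(lra)). pose proof (circ_gt0 (d + P) ltac:(lra)).
  apply Rinv_le_contravar; [apply pow_lt; nra|].
  apply pow_incr. split; [nra | apply circ_shift_ratio_le; lra].
Qed.

Lemma circ_eq0 (e : R) : e ^ 2 = 1 -> circ e = 0.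
Proof. intros He. unfold circ. rewrite He, Rminus_diag. apply sqrt_0. Qed.

Lemma circ_ge_min (x y p : R) : Rmin x y <= p <= Rmax x y ->
  Rmin (circ x) (circ y) <= circ p.
Proof.
  intros Hp.
  assert (p ^ 2 <= x ^ 2 \/ p ^ 2 <= y ^ 2) as [Hx|Hy].
  { unfold Rmin, Rmax in Hp.
    destruct (Rle_dec x y), (Rle_dec 0 p); [right | left | left | right]; nra. }
  - apply Rle_trans with (circ x); [apply Rmin_l | now apply circ_le_sqr].
  - apply Rle_trans with (circ y); [apply Rmin_r | now apply circ_le_sqr].
Qed.

Lemma circ_slope_shift_convex (p1 p p2 P : R) : -1 < p1 -> p1 <= p <= p2 ->
  0 <= P -> p2 + P < 1 ->
  circ_slope p - circ_slope p1 = circ_slope p2 - circ_slope p ->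
  circ_slope (p + P) - circ_slope (p1 + P) <= circ_slope (p2 + P) - circ_slope (p + P).
Proof.
  intros H1 Hp HP H2 E.
  apply (midpoint_convex_of_derive_ratio (fun x => circ_slope (x + P)) circ_slope
           (fun x => circ_slope' (x + P)) circ_slope'); auto; intros.
  - apply is_derive_shift, is_derive_circ_slope. lra.
  - apply is_derive_circ_slope. lra.
  - apply circ_slope'_gt0. lra.
  - apply circ_slope'_shift_ratio_le; lra.
Qed.

Lemma circ_shift_midpoint_nonneg (p1 p p2 P : R) : -1 < p1 -> p1 <= p <= p2 -> p2 < 1 ->
  circ_slope p - circ_slope p1 = circ_slope p2 - circ_slope p ->
  0 <= P -> p2 + P <= 1 ->
  circ (p1 + P) + circ (p2 + P) - 2 * circ (p + P) <= circ p1 + circ p2 - 2 * circ p.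
Proof.
  intros H1 Hp H2 E HP H2P.
  rewrite !(Rplus_comm _ P).
  rewrite <- (Rplus_0_l p1), <- (Rplus_0_l p2), <- (Rplus_0_l p) at 2.
  apply (nonincreasing_of_derive_nonpos
           (fun x => circ (x + p1) + circ (x + p2) - 2 * circ (x + p))
           (fun x => - circ_slope (x + p1) + - circ_slope (x + p2) - 2 * - circ_slope (x + p)));
    [exact HP | intros x Hx .. ].
  - apply (is_derive_minus (fun x => circ (x + p1) + circ (x + p2)) (fun x => 2 * circ (x + p))).
    + apply (is_derive_plus (fun x => circ (x + p1)) (fun x => circ (x + p2)));
        apply is_derive_shift, is_derive_circ; lra.
    + apply (is_derive_scal (fun x => circ (x + p))).
      apply is_derive_shift, is_derive_circ; lra.
  - rewrite !(Rplus_comm x).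
    pose proof (circ_slope_shift_convex p1 p p2 x H1 Hp ltac:(lra) ltac:(lra) E). lra.
  - assert (Hshift : forall q, continuity_pt (fun x => circ (x + q)) x).
    { intros q. apply (continuity_pt_comp (fun x => x + q) circ); [|apply continuous_circ].
      apply continuity_pt_plus; [apply continuity_pt_id | apply continuity_pt_const].
      now intros ? ?. }
    apply continuity_pt_minus; [apply continuity_pt_plus; apply Hshift|].
    apply continuity_pt_scal, Hshift.
Qed.

Lemma circ_shift_midpoint (p1 p p2 P : R) : -1 < p1 -> p1 <= p <= p2 -> p2 < 1 ->
  circ_slope p - circ_slope p1 = circ_slope p2 - circ_slope p ->
  -1 <= p1 + P -> p2 + P <= 1 ->
  circ (p1 + P) + circ (p2 + P) - circ p1 - circ p2 <= 2 * (circ (p + P) - circ p).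
Proof.
  intros H1 Hp H2 E H1P H2P.
  destruct (Rle_lt_dec 0 P) as [HP|HP].
  - pose proof (circ_shift_midpoint_nonneg p1 p p2 P H1 Hp H2 E HP H2P). lra.
  - assert (E' : circ_slope (- p) - circ_slope (- p2) = circ_slope (- p1) - circ_slope (- p))
      by (rewrite !circ_slope_opp; lra).
    pose proof (circ_shift_midpoint_nonneg (- p2) (- p) (- p1) (- P)
                  ltac:(lra) ltac:(lra) ltac:(lra) E' ltac:(lra) ltac:(lra)) as H.
    rewrite <- !Ropp_plus_distr, !circ_opp in H. lra.
Qed.

Lemma circ_support_le (p1 p2 : R) : -1 <= p1 -> p1 <= p2 -> p2 <= 1 ->
  exists p, p1 <= p <= p2 /\ forall P, -1 <= p1 + P -> p2 + P <= 1 ->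
    circ (p1 + P) + circ (p2 + P) - circ p1 - circ p2 <= 2 * (circ (p + P) - circ p).
Proof.
  intros H1 H12 H2.
  destruct (Req_dec p1 (-1)) as [E1|N1]; [|destruct (Req_dec p2 1) as [E2|N2]].
  - exists p1. split; [lra|]. intros P H1P H2P.
    rewrite (circ_eq0 p1) by (rewrite E1; ring).
    pose proof (circ_triangle p1 p2 P ltac:(rewrite E1; ring)); lra.
  - exists p2. split; [lra|]. intros P H1P H2P.
    rewrite (circ_eq0 p2) by (rewrite E2; ring).
    pose proof (circ_triangle p2 p1 P ltac:(rewrite E2; ring)); lra.
  - destruct (circ_slope_surj ((circ_slope p1 + circ_slope p2) / 2)) as [p [Hp E]].
    pose proof (circ_slope_mid_between p1 p2 p ltac:(lra) H12 ltac:(lra) Hp E).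
    exists p. split; [lra|]. intros P H1P H2P.
    apply circ_shift_midpoint; lra.
Qed.

Lemma circ_support (p1 p2 : R) : -1 <= p1 <= 1 -> -1 <= p2 <= 1 ->
  exists p, Rmin p1 p2 <= p <= Rmax p1 p2 /\
    forall P, -1 <= p1 + P <= 1 -> -1 <= p2 + P <= 1 ->
    circ (p1 + P) + circ (p2 + P) - circ p1 - circ p2 <= 2 * (circ (p + P) - circ p).
Proof.
  intros H1 H2. unfold Rmin, Rmax.
  destruct (Rle_dec p1 p2) as [H12|H21].
  - destruct (circ_support_le p1 p2) as [p [Hp Hsupp]]; try lra.
    exists p. split; [lra|]. intros P H1P H2P. apply Hsupp; lra.
  - destruct (circ_support_le p2 p1) as [p [Hp Hsupp]]; try lra.
    exists p. split; [lra|]. intros P H1P H2P.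
    pose proof (Hsupp P ltac:(lra) ltac:(lra)). lra.
Qed.

Lemma lub_glb_gap (L U : R -> Prop) (g : R) :
  (exists l, L l) -> (exists r, U r) -> (forall l r, L l -> U r -> l + g <= r) ->
  exists lo hi, lo + g <= hi /\
    (forall s, (forall l, L l -> l <= s) <-> lo <= s) /\
    (forall s, (forall r, U r -> s <= r) <-> s <= hi).
Proof.
  intros [l0 Hl0] [r0 Hr0] Hgap.
  destruct (completeness L) as [lo [Hlo_ub Hlo_min]].
  { exists (r0 - g). intros l Hl. pose proof (Hgap l r0 Hl Hr0). lra. }
  { now exists l0. }
  destruct (completeness (fun x => U (- x))) as [m [Hm_ub Hm_min]].
  { exists (- (l0 + g)). intros x Hx. pose proof (Hgap l0 (- x) Hl0 Hx). lra. }
  { exists (- r0). now rewrite Ropp_involutive. }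
  assert (Hhi : forall s, (forall r, U r -> s <= r) <-> s <= - m).
  { intros s. split.
    - intros Hs. assert (m <= - s); [|lra].
      apply Hm_min. intros x Hx. pose proof (Hs _ Hx). lra.
    - intros Hs r Hr. assert (- r <= m); [|lra].
      apply Hm_ub. now rewrite Ropp_involutive. }
  exists lo, (- m). split; [|split; [|exact Hhi]].
  - apply (proj1 (Hhi _)). intros r Hr. assert (lo <= r - g); [|lra].
    apply Hlo_min. intros l Hl. pose proof (Hgap l r Hl Hr). lra.
  - intros s. split; [apply Hlo_min|].
    intros Hs l Hl. pose proof (Hlo_ub l Hl). lra.
Qed.

(* Coordinates of [z] in the orthonormal frame [(u^perp, u)]; the change of coordinates is a
   reflection, hence its own inverse. *)
Definition frame (u z : pt) : pt :=
  (- snd u * fst z + fst u * snd z, fst u * fst z + snd u * snd z).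

Section Frame.

Variable u : pt.
Hypothesis Hu : unit_vector u.

Lemma frame_involutive (z : pt) : frame u (frame u z) = z.
Proof.
  unfold unit_vector in Hu. destruct z as [z1 z2]. unfold frame; cbn [fst snd]. f_equal.
  - transitivity ((fst u ^ 2 + snd u ^ 2) * z1); [ring | rewrite Hu; ring].
  - transitivity ((fst u ^ 2 + snd u ^ 2) * z2); [ring | rewrite Hu; ring].
Qed.

Lemma frame_inj (y z : pt) : frame u y = frame u z -> y = z.
Proof. intros E. now rewrite <- (frame_involutive y), E, frame_involutive. Qed.

Lemma unit_disk_frame (x y : pt) : unit_disk (frame u x) (frame u y) <-> unit_disk x y.
Proof.
  unfold unit_vector in Hu. unfold unit_disk, frame; cbn [fst snd].
  replace ((- snd u * fst y + fst u * snd y - (- snd u * fst x + fst u * snd x)) ^ 2 +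
           (fst u * fst y + snd u * snd y - (fst u * fst x + snd u * snd x)) ^ 2)
    with ((fst u ^ 2 + snd u ^ 2) * ((fst y - fst x) ^ 2 + (snd y - snd x) ^ 2)) by ring.
  rewrite Hu, Rmult_1_l. reflexivity.
Qed.

Lemma frame_shift (x : pt) (s : R) :
  frame u (shift x s u) = (fst (frame u x), snd (frame u x) + s).
Proof.
  unfold unit_vector in Hu. unfold frame, shift; cbn [fst snd]. f_equal; [ring|].
  transitivity (fst u * fst x + snd u * snd x + s * (fst u ^ 2 + snd u ^ 2)); [ring|].
  rewrite Hu. ring.
Qed.

Lemma orthogonal_frame (x : pt) : orthogonal x u <-> snd (frame u x) = 0.
Proof. unfold orthogonal, frame; cbn [snd]. split; intros; lra. Qed.

End Frame.

(* Above abscissa [fst z], the chord of B(a,1) ends at height [snd a + circ (fst z - fst a)]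
   and that of B(b,1) starts at [snd b - circ (fst z - fst b)].  The Steiner symmetral along
   the second axis of [⋂_(a ∈ A) B(a,1)] is the intersection of these conditions over all
   [a, b ∈ A]. *)
Definition steiner_pair (a b z : pt) : Prop :=
  (fst z - fst a) ^ 2 <= 1 /\ (fst z - fst b) ^ 2 <= 1 /\
  2 * Rabs (snd z) <= (snd a + circ (fst z - fst a)) - (snd b - circ (fst z - fst b)).

Lemma steiner_pair_self (a z : pt) : steiner_pair a a z <-> unit_disk (fst a, 0) z.
Proof.
  unfold steiner_pair, unit_disk. cbn [fst snd].
  rewrite disk_circ_iff, Rminus_0_r. split; [intros [? [_ ?]] | intros [? ?]]; repeat split; lra.
Qed.

Lemma separating_disk_pair (a b y : pt) :
  steiner_pair a a y -> steiner_pair b b y -> ~ steiner_pair a b y ->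
  exists c, (forall z, steiner_pair a b z -> unit_disk c z) /\ ~ unit_disk c y.
Proof.
  destruct a as [sa ta], b as [sb tb], y as [s0 t0].
  unfold steiner_pair, unit_disk; cbn [fst snd].
  intros [Ha [_ Hat]] [Hb [_ Hbt]] Hn.
  set (p1 := s0 - sa) in *. set (p2 := s0 - sb) in *.
  assert (Hgap : ta - tb + circ p1 + circ p2 < 2 * Rabs t0).
  { apply Rnot_le_lt. intros H. apply Hn. repeat split; lra. }
  destruct (circ_support p1 p2 (proj1 (sqr_le_1_iff _) Ha) (proj1 (sqr_le_1_iff _) Hb))
    as [p [Hp Hsupp]].
  assert (Ht0 : Rabs t0 <= circ p).
  { eapply Rle_trans; [|apply (circ_ge_min p1 p2 p Hp)]. apply Rmin_glb; lra. }
  set (c := (ta - tb + circ p1 + circ p2) / 2 - circ p).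
  set (ct := if Rle_dec 0 t0 then c else - c).
  assert (Hct : Rabs (t0 - ct) = Rabs t0 - c /\ forall t, Rabs (t - ct) <= Rabs t - c).
  { unfold ct. assert (c < 0) by (unfold c; lra).
    split; [|intros t]; destruct (Rle_dec 0 t0); unfold Rabs;
      repeat destruct Rcase_abs; lra. }
  exists (s0 - p, ct). cbn [fst snd]. split.
  - intros [s t] [Hs1 [Hs2 Hst]]. cbn [fst snd] in *.
    replace (s - sa) with (p1 + (s - s0)) in * by (unfold p1; ring).
    replace (s - sb) with (p2 + (s - s0)) in * by (unfold p2; ring).
    replace (s - (s0 - p)) with (p + (s - s0)) by ring.
    pose proof (Hsupp (s - s0) (proj1 (sqr_le_1_iff _) Hs1) (proj1 (sqr_le_1_iff _) Hs2)).
    apply disk_circ_iff. split.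
    + rewrite sqr_le_1_iff in *. unfold Rmin, Rmax in Hp. destruct (Rle_dec p1 p2); lra.
    + pose proof (proj2 Hct t). unfold c in *. lra.
  - replace (s0 - (s0 - p)) with p by ring. rewrite disk_circ_iff.
    intros [_ H]. destruct Hct as [Hct _]. unfold c in Hct. lra.
Qed.

Lemma separating_disk (a b y : pt) : ~ steiner_pair a b y ->
  exists c, (forall z, steiner_pair a a z -> steiner_pair b b z -> steiner_pair a b z ->
                       unit_disk c z) /\ ~ unit_disk c y.
Proof.
  intros Hn.
  destruct (classic (steiner_pair a a y)) as [Ha|Ha].
  2:{ exists (fst a, 0). split; [intros z Hz _ _|]; now rewrite <- steiner_pair_self. }
  destruct (classic (steiner_pair b b y)) as [Hb|Hb].
  2:{ exists (fst b, 0). split; [intros z _ Hz _|]; now rewrite <- steiner_pair_self. }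
  destruct (separating_disk_pair a b y Ha Hb Hn) as [c [Hin Hout]].
  exists c. split; auto.
Qed.

Section SteinerOfDiskIntersection.

Variables (A K : pt -> Prop) (u : pt).
Hypothesis HK : forall y, K y <-> disk_intersection A y.
Hypothesis Hu : unit_vector u.

Lemma mem_K_frame (z : pt) : K z <-> forall a, A a -> unit_disk (frame u a) (frame u z).
Proof.
  rewrite HK. unfold disk_intersection.
  split; intros H a Ha; apply (unit_disk_frame u Hu), H, Ha.
Qed.

Lemma unit_disk_vertical_iff (a : pt) (s t : R) : (s - fst a) ^ 2 <= 1 ->
  unit_disk a (s, t) <-> snd a - circ (s - fst a) <= t <= snd a + circ (s - fst a).
Proof.
  intros Hs. unfold unit_disk. cbn [fst snd].
  rewrite disk_circ_iff, Rabs_le_between'. tauto.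
Qed.

Lemma steiner_pair_of_steiner (y a b : pt) : steiner u K y -> A a -> A b ->
  steiner_pair (frame u a) (frame u b) (frame u y).
Proof.
  intros [x [t [lo [hi [Hx [Hlohi [Hchord [Ht ->]]]]]]]] Ha Hb.
  apply (orthogonal_frame u) in Hx.
  assert (Hend : forall s, lo <= s <= hi -> forall c, A c ->
            unit_disk (frame u c) (fst (frame u x), s)).
  { intros s Hs c Hc. rewrite <- (Rplus_0_l s), <- Hx, <- frame_shift by exact Hu.
    apply mem_K_frame; [apply Hchord, Hs | exact Hc]. }
  pose proof (Hend hi ltac:(lra) a Ha) as Htop. pose proof (Hend lo ltac:(lra) b Hb) as Hbot.
  unfold steiner_pair, unit_disk in *. rewrite frame_shift by exact Hu. cbn [fst snd] in *.
  rewrite Hx, Rplus_0_l.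
  apply disk_circ_iff in Htop as [Hsa Htop]. apply disk_circ_iff in Hbot as [Hsb Hbot].
  apply Rabs_le_between in Htop, Hbot.
  repeat split; try assumption. lra.
Qed.

Lemma steiner_of_steiner_pair (y : pt) : (exists a, A a) ->
  (forall a b, A a -> A b -> steiner_pair (frame u a) (frame u b) (frame u y)) ->
  steiner u K y.
Proof.
  intros [a1 Ha1] Hpair.
  destruct (frame u y) as [s0 t0] eqn:Ey. unfold steiner_pair in Hpair. cbn [fst snd] in Hpair.
  destruct (lub_glb_gap
              (fun l => exists b, A b /\ l = snd (frame u b) - circ (s0 - fst (frame u b)))
              (fun r => exists a, A a /\ r = snd (frame u a) + circ (s0 - fst (frame u a)))
              (2 * Rabs t0)) as [lo [hi [Hgap [Hlo Hhi]]]].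
  - eexists. exists a1. split; [exact Ha1 | reflexivity].
  - eexists. exists a1. split; [exact Ha1 | reflexivity].
  - intros l r [b [Hb ->]] [a [Ha ->]]. destruct (Hpair a b Ha Hb) as [_ [_ H]]. lra.
  assert (Hchord : forall s, K (shift (frame u (s0, 0)) s u) <-> lo <= s <= hi).
  { intros s. rewrite mem_K_frame, frame_shift, frame_involutive by exact Hu.
    cbn [fst snd]. rewrite Rplus_0_l, <- Hlo, <- Hhi. split.
    - intros H. split; intros _ [c [Hc ->]]; destruct (Hpair c c Hc Hc) as [Hs _];
        pose proof (proj1 (unit_disk_vertical_iff _ _ s Hs) (H c Hc)); lra.
    - intros [H1 H2] c Hc. destruct (Hpair c c Hc Hc) as [Hs _].
      apply (unit_disk_vertical_iff _ _ s Hs). split; [apply H1 | apply H2]; now exists c. }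
  exists (frame u (s0, 0)), t0, lo, hi. repeat split.
  - apply (orthogonal_frame u). now rewrite frame_involutive.
  - pose proof (Rabs_pos t0). lra.
  - now apply Hchord.
  - now apply Hchord.
  - intros Hs. now apply Hchord.
  - lra.
  - apply (frame_inj u Hu). rewrite Ey, frame_shift, frame_involutive by exact Hu.
    cbn [fst snd]. now rewrite Rplus_0_l.
Qed.

End SteinerOfDiskIntersection.

Lemma in_S2_of_separation (S : pt -> Prop) :
  (forall y, ~ S y -> exists c, (forall z, S z -> unit_disk c z) /\ ~ unit_disk c y) ->
  in_S2 S.
Proof.
  intros Hsep. exists (fun c => forall z, S z -> unit_disk c z).
  intros y. split.
  - intros Hy c Hc. now apply Hc.
  - intros Hy. apply NNPP. intros Hn.
    destruct (Hsep y Hn) as [c [Hc Hcy]]. now apply Hcy, Hy.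
Qed.

Theorem theorem5p12 (K : pt -> Prop) (u : pt) :
  in_S2 K ->
  (exists y, K y) ->
  (exists y, ~ K y) ->
  unit_vector u ->
  in_S2 (steiner u K).
Proof.
  intros [A HK] _ [y0 Hy0] Hu.
  assert (HA : exists a, A a).
  { apply NNPP. intros HA. apply Hy0, HK. intros a Ha. exfalso. apply HA. now exists a. }
  apply in_S2_of_separation. intros y Hy.
  assert (Hab : exists a b, A a /\ A b /\ ~ steiner_pair (frame u a) (frame u b) (frame u y)).
  { apply NNPP. intros Hn. apply Hy, (steiner_of_steiner_pair A K u HK Hu y HA).
    intros a b Ha Hb. apply NNPP. intros Hp. apply Hn. now exists a, b. }
  destruct Hab as [a [b [Ha [Hb Hn]]]].
  destruct (separating_disk _ _ _ Hn) as [c [Hin Hout]].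
  exists (frame u c). split.
  - intros z Hz. rewrite <- (unit_disk_frame u Hu), frame_involutive by exact Hu.
    apply Hin; apply (steiner_pair_of_steiner A K u HK Hu); assumption.
  - rewrite <- (unit_disk_frame u Hu), frame_involutive by exact Hu. exact Hout.
Qed.
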